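(* In the two-unicast setting, suppose $k_{1-2}+k_{2-1}\le\min(k_{12-1},k_{12-2})$. Then every pair of nonnegative integers $(R_1,R_2)$ with $$R_1\le k_{12-1}-k_{2-1},\qquad R_2\le k_{12-2}-k_{1-2}$$ is achievable.
   Context: $G=(V,E)$ is a directed acyclic network with unit-capacity edges (each carrying one symbol of $GF(q)$ per use), sources $s_1,s_2$ (no incoming edges) and terminals $t_1,t_2$ (no outgoing edges); $t_i$ wants the message of $s_i$. For $N_1,N_2\subseteq\{1,2\}$, $k_{N_1-N_2}$ is the minimum cut from $\{s_i:i\in N_1\}$ to $\{t_j:j\in N_2\}$. A linear network code over $GF(q)$: symbols on edges leaving a non-source node are $GF(q)$-linear combinations of the node's incoming symbols; symbols on edges leaving $s_i$ are $GF(q)$-linear combinations of $s_i$'s message symbols. $(R_1,R_2)$ is achievable if for some finite field $GF(q)$ there is a linear network code such that, when $s_i$ observes $R_i$ independent symbols of $GF(q)$, $t_1$ uniquely recovers $s_1$'s message and $t_2$ uniquely recovers $s_2$'s message (neither terminal needs to recover the other source). *)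

From HB Require Import structures.
From mathcomp Require Import all_boot all_order all_algebra all_field.
Set Implicit Arguments. Unset Strict Implicit. Unset Printing Implicit Defensive.
Import GRing.Theory.

(* A network: finite node type V, finite edge type E (parallel edges allowed,
   each edge has unit capacity), tail map tl and head map hd. *)
Section Network.
Variables (V E : finType) (tl hd : E -> V).

Definition avoid_rel (C : {set E}) : rel V :=
  fun x y => [exists e, [&& e \notin C, tl e == x & hd e == y]].

Definition full_rel : rel V := avoid_rel set0.

Definition acyclic : Prop := forall e : E, ~~ connect full_rel (hd e) (tl e).

Definition separates (S T : pred V) (C : {set E}) : bool :=
  [forall x, forall y, (S x && T y) ==> ~~ connect (avoid_rel C) x y].

Definition mincut (S T : pred V) : nat :=
  \big[minn/#|E|]_(C : {set E} | separates S T C) #|C|.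

Local Open Scope ring_scope.

Definition consistent (F : finFieldType) (s1 s2 : V) (R1 R2 : nat)
    (a1 : E -> 'rV[F]_R1) (a2 : E -> 'rV[F]_R2) (b : E -> E -> F)
    (x1 : 'rV[F]_R1) (x2 : 'rV[F]_R2) (y : E -> F) : Prop :=
  forall e : E,
    (tl e = s1 -> y e = \sum_(k < R1) a1 e 0 k * x1 0 k) /\
    (tl e = s2 -> y e = \sum_(k < R2) a2 e 0 k * x2 0 k) /\
    (tl e <> s1 -> tl e <> s2 ->
       y e = \sum_(e' : E | hd e' == tl e) b e' e * y e').

(* (R1, R2) achievable by a linear network code over some finite field:
   the symbols on the incoming edges of t_i determine the message of s_i *)
Definition achievable (s1 s2 t1 t2 : V) (R1 R2 : nat) : Prop :=
  exists (F : finFieldType) (a1 : E -> 'rV[F]_R1) (a2 : E -> 'rV[F]_R2)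
         (b : E -> E -> F),
    forall (x1 x1' : 'rV[F]_R1) (x2 x2' : 'rV[F]_R2) (y y' : E -> F),
      consistent s1 s2 a1 a2 b x1 x2 y ->
      consistent s1 s2 a1 a2 b x1' x2' y' ->
      ((forall e, hd e = t1 -> y e = y' e) -> x1 = x1') /\
      ((forall e, hd e = t2 -> y e = y' e) -> x2 = x2').

End Network.

(* The code is built by the algebraic (Jaggi-Sanders) method, made deterministic
   over a prime field with more elements than pairs (cut, terminal).  Messages
   live in F^(R1+R2): s1 owns the first R1 coordinates, s2 the last R2, and
   edge e carries the scalar product of a global coding row g e with the message.
   - Linear algebra: over a finite field, a space contains a row avoiding any
     few subspaces not containing it; iterating gives generic rows that raise
     ranks as much as possible ([generic_rows]).
   - Graphs and cuts: paths avoiding an edge set, minimum cuts, induction along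
     an acyclic network.
   - Construction ([network_code]): nodes are coded in topological order,
     keeping the invariant that for every cut C and terminal t the space that
     may still reach t past C has rank at least target(t) - |C|.  Initially this
     is pure cut counting ([initial_rank]); at the end t receives rank target(t).
   - Decoding: with target(t1) = R1 + min(R2, k_{2-1}), the interference of s2
     at t1 crosses a minimum s2-t1 cut, so t1 receives all s1 coordinates
     ([received_contains]) and recovers x1; symmetrically for t2. *)
From HB Require Import structures.
From mathcomp Require Import all_boot all_order all_algebra all_field.
From mathcomp Require Import zify.
Set Implicit Arguments. Unset Strict Implicit. Unset Printing Implicit Defensive.
Import Order.TTheory GRing.Theory.
Local Open Scope ring_scope.

Lemma finite_avoid (L : finType) (I : eqType) (s : seq I) (P : I -> pred L) :
  (forall i, i \in s -> #|P i| <= 1)%N -> (size s < #|L|)%N ->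
  exists l, forall i, i \in s -> ~~ P i l.
Proof.
move=> P_le1 lt_sL; pose bad := [set l | has (P^~ l) s].
have card_bad : (#|bad| <= size s)%N.
  rewrite {}/bad; elim: s P_le1 {lt_sL} => [|i s IH] P_le1.
    by rewrite leqn0 cards_eq0; apply/eqP/setP => l; rewrite !inE.
  have -> : [set l | has (P^~ l) (i :: s)] = [set l in P i] :|: [set l | has (P^~ l) s].
    by apply/setP => l; rewrite !inE.
  apply: leq_trans (leq_card_setU _ _) _; rewrite cardsE /= -add1n.
  apply: leq_add (P_le1 _ (mem_head _ _)) (IH _) => j js.
  by apply: P_le1; rewrite inE js orbT.
have /set0Pn [l] : ~: bad != set0.
  by rewrite -card_gt0; move: (cardsC bad); lia.
by rewrite !inE => /hasPn l_good; exists l.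
Qed.

Lemma line_meets_once (F : finFieldType) n (W : 'M[F]_n) (w u : 'rV[F]_n) :
  (#|[pred l : F | ~~ (u <= W)%MS && ((w + l *: u)%R <= W)%MS]| <= 1)%N.
Proof.
apply/card_le1_eqP => l1 l2; rewrite !inE => /andP [uW wl1W] /andP [_ wl2W].
apply/eqP; rewrite -subr_eq0; apply: contraNT uW => l12_nz.
have dW : ((l2 - l1) *: u <= W)%MS.
  have -> : (l2 - l1) *: u = (w + l2 *: u) - (w + l1 *: u).
    by rewrite scalerBl opprD addrACA subrr add0r.
  by apply: addmx_sub => //; rewrite eqmx_opp.
by rewrite -[u](scalerK l12_nz); apply: scalemx_sub.
Qed.

Lemma avoid_subspaces (F : finFieldType) n (H : 'M[F]_n) (I : eqType)
    (W : I -> 'M[F]_n) (s : seq I) :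
  (size s < #|F|)%N ->
  exists2 u : 'rV[F]_n, (u <= H)%MS &
    forall i, i \in s -> (H <= W i)%MS || ~~ (u <= W i)%MS.
Proof.
elim: s => [|i0 s IH] lt_sF; first by exists 0; rewrite ?sub0mx.
have [u uH uW] := IH (ltnW lt_sF).
have [u_ok | /norP [/row_subPn [j wW] /negbNE uW0]] :=
  boolP ((H <= W i0)%MS || ~~ (u <= W i0)%MS).
  by exists u => // i; rewrite inE => /predU1P [-> | /uW].
(* u lies in W i0: move it along the line through a row w of H outside W i0 *)
set w := row j H in wW.
have [l l_ok] := @finite_avoid F I s
  (fun i => [pred l : F | ~~ (u <= W i)%MS && ((w + l *: u)%R <= W i)%MS])
  (fun i _ => line_meets_once (W i) w u) (ltnW lt_sF).
exists (w + l *: u); first by apply: addmx_sub; rewrite ?row_sub ?scalemx_sub.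
move=> i; rewrite inE => /predU1P [-> | si].
  apply/orP; right; apply: contra wW => wlW.
  rewrite -[w](addrK (l *: u)); apply: addmx_sub => //.
  by rewrite eqmx_opp scalemx_sub.
have := l_ok i si; rewrite inE negb_and negbK => /orP [uWi | ->]; last by rewrite orbT.
by move: (uW i si); rewrite uWi orbF => ->.
Qed.

Lemma rank_add_generic (F : fieldType) n (U Y H : 'M[F]_n) (u : 'rV[F]_n) k :
  (U <= Y)%MS -> (H <= Y)%MS || ~~ (u <= Y)%MS ->
  (minn (\rank (U + H)) (\rank U + k) <= \rank Y)%N ->
  (minn (\rank (U + H)) (\rank U + k.+1) <= \rank (<<u>> + Y))%N.
Proof.
move=> UY /orP [HY | uY] le_Y.
  apply: leq_trans (geq_minl _ _) (mxrankS _).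
  by rewrite addsmx_sub (submx_trans UY) ?(submx_trans HY) ?addsmxSr.
have : (\rank Y < \rank (<<u>> + Y))%N.
  by apply: rank_ltmx; rewrite ltmxE addsmxSr addsmx_sub genmxE (negbTE uY).
lia.
Qed.

Lemma generic_rows (F : finFieldType) n (H : 'M[F]_n) (T J : finType)
    (U : J -> 'M[F]_n) (S : J -> {set T}) :
  (#|J| < #|F|)%N ->
  exists2 g : T -> 'rV[F]_n, (forall e, g e <= H)%MS & forall j,
    (minn (\rank (U j + H)) (\rank (U j) + #|S j|)
      <= \rank (U j + \sum_(e in S j) <<g e>>))%N.
Proof.
move=> lt_JF.
suff /(_ (enum T) (enum_uniq T)) [g gH g_ok] : forall D : seq T, uniq D ->
    exists2 g : T -> 'rV[F]_n, (forall e, g e <= H)%MS & forall j,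
      (minn (\rank (U j + H)) (\rank (U j) + #|S j :&: [set e in D]|)
        <= \rank (U j + \sum_(e in S j :&: [set e in D]) <<g e>>))%N.
  exists g => // j; have := g_ok j.
  by rewrite (_ : [set e in enum T] = setT) ?setIT //; apply/setP => e; rewrite !inE mem_enum.
elim=> [_ | e0 D IH /andP [e0D uniqD]].
  exists (fun=> 0) => [e | j]; first exact: sub0mx.
  rewrite (_ : [set e in [::]] = set0) ?setI0 ?cards0 ?big_set0 ?addn0; last first.
    by apply/setP => e; rewrite !inE.
  exact: leq_trans (geq_minr _ _) (mxrankS (addsmxSl _ _)).
have [g gH g_ok] := IH uniqD.
pose X j := (U j + \sum_(e in (S j :&: [set e in D])%SET) <<g e>>)%MS.
have size_J : (size (enum J) < #|F|)%N by rewrite -cardE.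
have [u uH u_ok] := avoid_subspaces H X size_J.
exists (fun e => if e == e0 then u else g e) => [e | j]; first by case: eqP.
set D' := S j :&: [set e in D].
have sum_old : (\sum_(e in D') <<if e == e0 then u else g e>> = \sum_(e in D') <<g e>>)%MS.
  apply: eq_bigr => e; rewrite !inE => /andP [_ eD].
  by case: eqP => // e_e0; move: e0D; rewrite -e_e0 eD.
have [e0S | e0S] := boolP (e0 \in S j); last first.
  have -> : S j :&: [set e in e0 :: D] = D'.
    by apply/setP => e; rewrite !inE; case: eqP => [-> | //]; rewrite (negbTE e0S).
  by rewrite sum_old.
have -> : S j :&: [set e in e0 :: D] = e0 |: D'.
  by apply/setP => e; rewrite !inE; case: eqP => [-> | //]; rewrite e0S.
have e0D' : e0 \notin D' by rewrite !inE (negbTE e0D) andbF.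
rewrite cardsU1 e0D' big_setU1 //= eqxx sum_old add1n.
rewrite addsmxA (addsmxC (U j) <<u>>%MS) -addsmxA.
apply: rank_add_generic; [exact: addsmxSl | exact: u_ok (mem_enum _ _) | exact: g_ok].
Qed.

Lemma rank_sum_rows (F : fieldType) n (I : finType) (P : pred I) (v : I -> 'rV[F]_n) :
  (\rank (\sum_(i | P i) <<v i>>)%MS <= #|[pred i | P i]|)%N.
Proof.
rewrite -sum1_card.
apply: (big_ind2 (fun (M : 'M[F]_n) k => \rank M <= k)%N) => [|A a B b le_A le_B|i _].
- by rewrite mxrank0.
- by apply: leq_trans (mxrank_adds_leqif A B) _; apply: leq_add.
- by rewrite genmxE rank_leq_row.
Qed.

Lemma sub_sum_rows (F : fieldType) n (I : finType) (P : pred I)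
    (w : I -> 'rV[F]_n) (v : 'rV[F]_n) :
  (v <= \sum_(i | P i) <<w i>>)%MS -> exists c : I -> F, v = \sum_(i | P i) c i *: w i.
Proof.
case/sub_sumsmxP => u ->.
have /fin_all_exists [c c_ok] : forall i, exists a : F, u i *m <<w i>>%MS = a *: w i.
  by move=> i; apply/sub_rVP; rewrite -(genmxE (w i)) submxMl.
by exists c; apply: eq_bigr => i _; rewrite c_ok.
Qed.

Lemma sumsmx_mono (F : fieldType) n (I : finType) (P Q : pred I) (A B : I -> 'M[F]_n) :
  (forall i, P i -> Q i /\ (A i <= B i)%MS) ->
  (\sum_(i | P i) A i <= \sum_(i | Q i) B i)%MS.
Proof.
move=> PQ; apply/sumsmx_subP => i /PQ [Qi AB].
exact: sumsmx_sup Qi AB.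
Qed.

(* If Pw + Pi = 1, a space M losing at least rank Pw when projected by Pi
   contains Pw: this is how a terminal recovers its own message. *)
Lemma sub_complement (F : fieldType) n (M Pw Pi : 'M[F]_n) :
  Pw + Pi = 1%:M -> (\rank Pw + \rank (M *m Pi) <= \rank M)%N -> (Pw <= M)%MS.
Proof.
move=> PwPi le_rank.
have M_sub : (M <= Pw + M *m Pi)%MS.
  rewrite -{1}[M]mulmx1 -PwPi mulmxDr.
  by apply: addmx_sub_adds; [exact: submxMl | exact: submx_refl].
have le_rPM : (\rank (Pw + M)%MS <= \rank M)%N.
  apply: leq_trans (mxrankS (_ : Pw + M <= Pw + M *m Pi)%MS) _.
    by rewrite addsmx_sub addsmxSl M_sub.
  exact: leq_trans (mxrank_adds_leqif _ _) le_rank.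
case: (mxrank_leqif_sup (addsmxSr Pw M)) => le_rM eq_sub.
suff : (Pw + M <= M)%MS by rewrite addsmx_sub => /andP [].
by rewrite -eq_sub eqn_leq le_rM le_rPM.
Qed.

Definition dot (R : comPzRingType) n (u x : 'rV[R]_n) : R := (u *m x^T) 0 0.

Lemma dotE (R : comPzRingType) n (u x : 'rV[R]_n) : dot u x = \sum_k u 0 k * x 0 k.
Proof. by rewrite /dot !mxE; apply: eq_bigr => k _; rewrite mxE. Qed.

Lemma dot0 (R : comPzRingType) n (x : 'rV[R]_n) : dot 0 x = 0.
Proof. by rewrite /dot mul0mx mxE. Qed.

Lemma dot_split (R : comPzRingType) n1 n2 (u : 'rV[R]_(n1 + n2)) x1 x2 :
  dot u (row_mx x1 x2) = dot (lsubmx u) x1 + dot (rsubmx u) x2.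
Proof. by rewrite /dot -{1}[u]hsubmxK tr_row_mx mul_row_col mxE. Qed.

Section Reachability.
Variables (V E : finType) (tl hd : E -> V).

Definition reach (C : {set E}) x y := connect (avoid_rel tl hd C) x y.

Lemma reach_edge (C : {set E}) x e : e \notin C -> reach C x (tl e) -> reach C x (hd e).
Proof.
move=> eC x_tl; apply: connect_trans x_tl (connect1 _).
by apply/existsP; exists e; rewrite eC !eqxx.
Qed.

Lemma reach_subset (C C' : {set E}) x y : C \subset C' -> reach C' x y -> reach C x y.
Proof.
move=> sCC'; apply: connect_sub => a b /existsP [e /and3P [eC' /eqP <- /eqP <-]].
by apply: connect1; apply/existsP; exists e; rewrite !eqxx andbT (contra (subsetP sCC' e)).
Qed.

Lemma reach_first (C : {set E}) x y : x != y -> reach C x y ->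
  exists e, [/\ e \notin C, tl e = x & reach C (hd e) y].
Proof.
move=> xy /connectP [[|z p] /=]; first by move=> _ y_x; rewrite y_x eqxx in xy.
case/andP => /existsP [e /and3P [eC /eqP tl_e /eqP hd_e]] zp y_last.
by exists e; split=> //; rewrite hd_e; apply/connectP; exists p.
Qed.

Lemma reach_sink (C : {set E}) t y : (forall e, tl e != t) -> reach C t y -> y = t.
Proof.
move=> t_sink; have [-> // | ty] := eqVneq t y.
by case/(reach_first ty) => e [_ tl_e _]; move: (t_sink e); rewrite tl_e eqxx.
Qed.

(* The ancestors of v; along an edge their number strictly grows, which
   drives every induction along the network. *)
Definition ancestors v := [set u | reach set0 u v].

Hypothesis acyc : acyclic tl hd.

Lemma no_loop e : tl e != hd e.
Proof. by apply/eqP => tl_hd; move: (acyc e); rewrite tl_hd connect0. Qed.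

Lemma ancestors_lt e : (#|ancestors (tl e)| < #|ancestors (hd e)|)%N.
Proof.
apply: proper_card; apply/properP; split.
  by apply/subsetP => u; rewrite !inE; apply: reach_edge; rewrite inE.
by exists (hd e); rewrite !inE; [exact: connect0 | exact: acyc].
Qed.

Lemma acyclic_edge_ind (P : E -> Prop) :
  (forall e, (forall e', hd e' = tl e -> P e') -> P e) -> forall e, P e.
Proof.
move=> IH; suff P_lt k e : (#|ancestors (tl e)| < k)%N -> P e.
  by move=> e; apply: (P_lt _ e (ltnSn _)).
elim: k e => // k IHk e lt_e; apply: IH => e' hd_e'; apply: IHk.
by apply: leq_trans (ancestors_lt e') _; rewrite hd_e'.
Qed.

Lemma acyclic_minimal (A : {set V}) : A != set0 ->
  exists2 v, v \in A & forall e, hd e = v -> tl e \notin A.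
Proof.
case/set0Pn => v0 v0A.
case: (arg_minnP (fun x => #|ancestors x|) v0A) => v vA v_min.
exists v => // e hd_e; apply/negP => /v_min.
by rewrite leqNgt -hd_e ancestors_lt.
Qed.

End Reachability.

Section Cuts.
Variables (V E : finType) (tl hd : E -> V).
Local Notation reach := (reach tl hd).

Lemma separatesP (S T : pred V) (C : {set E}) :
  reflect (forall x y, S x -> T y -> ~~ reach C x y) (separates tl hd S T C).
Proof.
apply: (iffP forallP) => [sep x y Sx Ty | sep x].
  by move: (sep x) => /forallP /(_ y); rewrite Sx Ty.
by apply/forallP => y; apply/implyP => /andP [Sx Ty]; apply: sep.
Qed.

Lemma mincut_le (S T : pred V) (C : {set E}) :
  separates tl hd S T C -> (mincut tl hd S T <= #|C|)%N.
Proof. exact: (@bigmin_le_cond _ nat). Qed.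

(* When S and T are disjoint, all edges form a cut, so a minimum cut exists. *)
Lemma mincut_ex (S T : pred V) : (forall x y, S x -> T y -> x != y) ->
  exists2 C, separates tl hd S T C & #|C| = mincut tl hd S T.
Proof.
move=> ST_disj; have cutT : separates tl hd S T setT.
  apply/separatesP => x y Sx Ty; apply/negP => /(reach_first (ST_disj x y Sx Ty)).
  by case=> e []; rewrite inE.
have [C C_cut C_min] :=
  @eq_bigmin _ nat _ #|E| _ _ (fun C : {set E} => #|C|) cutT (fun C _ => max_card C).
by exists C => //; symmetry; exact: C_min.
Qed.

Lemma separates_union (S Sa Sb T : pred V) (C C' : {set E}) :
  (forall x, S x -> Sa x || Sb x) ->
  separates tl hd Sa T C -> separates tl hd Sb T C' ->
  separates tl hd S T (C :|: C').
Proof.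
move=> SSab /separatesP sepa /separatesP sepb; apply/separatesP => x y Sx Ty.
case/orP: (SSab x Sx) => [Sax | Sbx].
  by apply: contra (sepa x y Sax Ty); apply: reach_subset; apply: subsetUl.
by apply: contra (sepb x y Sbx Ty); apply: reach_subset; apply: subsetUr.
Qed.

End Cuts.

Section LinearCode.
Variables (V E : finType) (tl hd : E -> V).
Variables (F : fieldType) (n : nat) (src : V -> 'M[F]_n).

Definition node_space (g : E -> 'rV[F]_n) v :=
  (src v + \sum_(e | hd e == v) <<g e>>)%MS.

Definition code_valid (g : E -> 'rV[F]_n) :=
  forall e, (g e <= node_space g (tl e))%MS.

Variable g : E -> 'rV[F]_n.
Hypotheses (acyc : acyclic tl hd) (g_valid : code_valid g).

(* Interference travels along paths: if Pi kills the sources other than sa,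
   the Pi-part of the rows received at t comes from a cut C between sa and t. *)
Lemma interference_through_cut (Pi : 'M[F]_n) sa t (C : {set E}) :
  (forall v, v != sa -> src v *m Pi = 0) ->
  separates tl hd (pred1 sa) (pred1 t) C ->
  ((\sum_(e | hd e == t) <<g e>>)%MS *m Pi <= \sum_(c in C) <<g c *m Pi>>)%MS.
Proof.
move=> src_Pi /separatesP sep.
set Z := (\sum_(c in C) <<g c *m Pi>>)%MS.
have cut_edge e : e \in C -> (g e *m Pi <= Z)%MS.
  by move=> eC; apply: (sumsmx_sup e) => //; rewrite genmxE.
have behind e : e \notin C -> ~~ reach tl hd C sa (tl e) -> (g e *m Pi <= Z)%MS.
  elim/(acyclic_edge_ind acyc): e => e IH eC no_path.
  apply: submx_trans (submxMr Pi (g_valid e)) _.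
  rewrite addsmxMr addsmx_sub; apply/andP; split.
    rewrite src_Pi ?sub0mx //; apply: contraNneq no_path => ->; exact: connect0.
  rewrite sumsmxMr; apply/sumsmx_subP => e' /eqP hd_e'.
  apply: submx_trans (submxMr Pi (_ : <<g e'>> <= g e')%MS) _; first by rewrite genmxE.
  have [e'C | e'C] := boolP (e' \in C); first exact: cut_edge.
  apply: IH => //; apply: contra no_path; rewrite -hd_e'; exact: reach_edge.
rewrite sumsmxMr; apply/sumsmx_subP => e /eqP hd_e.
apply: submx_trans (submxMr Pi (_ : <<g e>> <= g e)%MS) _; first by rewrite genmxE.
have [eC | eC] := boolP (e \in C); first exact: cut_edge.
apply: behind => //; apply: contra (sep sa t (eqxx _) (eqxx _)); rewrite -hd_e.
exact: reach_edge.
Qed.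

Lemma received_contains (Pw Pi : 'M[F]_n) sa t (C : {set E}) :
  Pw + Pi = 1%:M -> (forall v, v != sa -> src v *m Pi = 0) ->
  separates tl hd (pred1 sa) (pred1 t) C ->
  (\rank Pw + minn (\rank Pi) #|C| <= \rank (\sum_(e | hd e == t) <<g e>>))%N ->
  (Pw <= \sum_(e | hd e == t) <<g e>>)%MS.
Proof.
move=> PwPi src_Pi sep le_rank; apply: sub_complement PwPi (leq_trans _ le_rank).
rewrite leq_add2l leq_min mxrankM_maxr /=.
apply: leq_trans (mxrankS (interference_through_cut src_Pi sep)) _.
by apply: leq_trans (rank_sum_rows _ _) _; rewrite (eq_card (B := C)).
Qed.

End LinearCode.

Section Construction.
Variables (V E : finType) (tl hd : E -> V).
Hypothesis acyc : acyclic tl hd.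
Variables (K : finType) (term : K -> V).
Hypothesis term_sink : forall e k, tl e != term k.
Variables (F : finFieldType) (n : nat) (src : V -> 'M[F]_n).
Hypothesis src_term : forall k, src (term k) = 0.
Hypothesis large_field : (#|{: {set E} * K}| < #|F|)%N.
Variable target : K -> nat.
Hypothesis target_init : forall C k,
  (target k <= \rank (\sum_(u | reach tl hd C u (term k)) src u)%MS + #|C|)%N.

Local Notation reach := (reach tl hd).

Definition inner := [set v | [forall k, v != term k]].

Lemma tail_inner e : tl e \in inner.
Proof. by rewrite inE; apply/forallP => k; exact: term_sink. Qed.

Definition inflow (g : E -> 'rV[F]_n) (P : {set V}) (C : {set E}) u :=
  (src u + \sum_(e | (tl e \in P) && (hd e == u) && (e \notin C)) <<g e>>)%MS.

Definition frontier (g : E -> 'rV[F]_n) (P : {set V}) (C : {set E}) t :=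
  (\sum_(u | (u \notin P) && reach C u t) inflow g P C u)%MS.

Definition coded (P : {set V}) (g : E -> 'rV[F]_n) :=
  [/\ P \subset inner, forall e, hd e \in P -> tl e \in P,
      forall e, tl e \in P -> (g e <= node_space hd src g (tl e))%MS &
      forall C k, (target k <= \rank (frontier g P C (term k)) + #|C|)%N].

Lemma coded0 : coded set0 (fun=> 0).
Proof.
split=> [||e|C k]; first exact: sub0set.
- by move=> e; rewrite inE.
- by rewrite inE.
apply: leq_trans (target_init C k) _; rewrite leq_add2r mxrankS //.
by apply: sumsmx_mono => u reach_u; split; [rewrite inE | exact: addsmxSl].
Qed.

Section Step.
Variables (P : {set V}) (g g0 : E -> 'rV[F]_n) (v : V).
Hypotheses (P_closed : forall e, hd e \in P -> tl e \in P) (vP : v \notin P).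
Hypotheses (v_inner : v \in inner) (v_preds : forall e, hd e = v -> tl e \in P).

Definition rest (j : {set E} * K) :=
  (\sum_(u | (u \notin v |: P) && reach j.1 u (term j.2)) inflow g P j.1 u)%MS.

Definition useful_out (j : {set E} * K) :=
  [set e | [&& tl e == v, e \notin j.1 & reach j.1 (hd e) (term j.2)]].

Definition code_at_v e := if tl e == v then g0 e else g e.

Lemma code_at_v_old e : tl e \in P -> code_at_v e = g e.
Proof. by rewrite /code_at_v; case: eqP => // ->; rewrite (negbTE vP). Qed.

Lemma node_space_at_v u :
  u \in v |: P -> node_space hd src code_at_v u = node_space hd src g u.
Proof.
move=> u_in; rewrite /node_space; congr (_ + _)%MS.
apply: eq_bigr => e /eqP hd_e; rewrite code_at_v_old //.
by case/setU1P: u_in => [u_v | uP]; [apply: v_preds | apply: P_closed]; rewrite hd_e.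
Qed.

Lemma frontier_before C k :
  (frontier g P C (term k) <= rest (C, k) + node_space hd src g v)%MS.
Proof.
apply/sumsmx_subP => u /andP [uP reach_u].
have [-> | uv] := eqVneq u v.
  apply: submx_trans _ (addsmxSr _ _); apply: addsmxS => //.
  by apply: sumsmx_mono => e /andP [/andP [_ ->] _].
apply: submx_trans _ (addsmxSl _ _); apply: (sumsmx_sup u) => //=.
by rewrite !inE negb_or uv uP.
Qed.

Lemma frontier_cut_useful C k :
  (frontier g P (C :|: useful_out (C, k)) (term k) <= rest (C, k))%MS.
Proof.
set t := term k; set S := useful_out (C, k).
have v_blocked : ~~ reach (C :|: S) v t.
  have vt : v != t by move: v_inner; rewrite inE => /forallP /(_ k).
  apply/negP => /(reach_first vt) [e [eCS tl_e reach_e]].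
  move: eCS; rewrite inE negb_or => /andP [eC]; rewrite inE tl_e eqxx eC /=.
  by rewrite (reach_subset (subsetUl C S) reach_e).
apply/sumsmx_subP => u /andP [uP reach_u].
have uv : u != v by apply: contraNneq v_blocked => <-.
apply: (sumsmx_sup u) => /=.
  by rewrite !inE negb_or uv uP (reach_subset (subsetUl C S) reach_u).
apply: addsmxS => //; apply: sumsmx_mono => e /andP [/andP [-> ->]].
by rewrite inE negb_or => /andP [-> _].
Qed.

Lemma frontier_after C k :
  (rest (C, k) + \sum_(e in useful_out (C, k)) <<g0 e>>
     <= frontier code_at_v (v |: P) C (term k))%MS.
Proof.
rewrite addsmx_sub; apply/andP; split.
  apply: sumsmx_mono => u /andP [uP' reach_u]; split; first by rewrite uP'.
  apply: addsmxS => //; apply: sumsmx_mono => e /andP [/andP [eP ->] ->].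
  by rewrite inE eP orbT code_at_v_old.
apply/sumsmx_subP => e; rewrite inE => /and3P [/eqP tl_e eC reach_e].
have hd_new : hd e \notin v |: P.
  rewrite !inE negb_or -tl_e eq_sym no_loop //=.
  by apply: contra vP => /P_closed; rewrite tl_e.
apply: (sumsmx_sup (hd e)); first by rewrite hd_new.
apply: submx_trans _ (addsmxSr _ _); apply: (sumsmx_sup e).
  by rewrite !inE tl_e !eqxx eC.
by rewrite /code_at_v tl_e eqxx.
Qed.

End Step.

Lemma coded_step P g v : coded P g -> v \notin P -> v \in inner ->
  (forall e, hd e = v -> tl e \in P) -> exists g', coded (v |: P) g'.
Proof.
case=> P_inner P_closed P_valid P_rank vP v_inner v_preds.
have [g0 g0_sub g0_rank] :=
  generic_rows (node_space hd src g v) (rest P g v) (useful_out v) large_field.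
exists (code_at_v g g0 v); split.
- by rewrite subUset sub1set v_inner P_inner.
- by move=> e /setU1P [/v_preds | /P_closed] tl_in; apply/setU1P; right.
- move=> e tl_in; rewrite (node_space_at_v g g0 P_closed vP v_preds tl_in).
  rewrite /code_at_v; case: eqP => [-> | tl_v]; first exact: g0_sub.
  by apply: P_valid; case/setU1P: tl_in.
(* with U = rest and S = useful_out: the invariant at C gives
   target <= rank (U + space of v) + |C|, at C :|: S it gives
   target <= rank U + |C| + |S|, and g0 is generic for the pair (U, S) *)
move=> C k.
have := P_rank C k; have := P_rank (C :|: useful_out v (C, k)) k.
have := mxrankS (frontier_before P g v C k).
have := mxrankS (frontier_cut_useful P g v_inner C k).
have := mxrankS (frontier_after g g0 P_closed vP C k).
have := g0_rank (C, k); have [card_CS _] := leq_card_setU C (useful_out v (C, k)).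
lia.
Qed.

Lemma coded_card m : (m <= #|inner|)%N ->
  exists (P : {set V}) (g : E -> 'rV[F]_n), #|P| = m /\ coded P g.
Proof.
elim: m => [_ | m IH lt_m].
  by exists set0, (fun=> 0); rewrite cards0; split; last exact: coded0.
have [P [g [card_P cod]]] := IH (ltnW lt_m).
have [P_inner _ _ _] := cod.
have : inner :\: P != set0.
  by rewrite setD_eq0; apply/negP => /subset_leq_card; lia.
case/(acyclic_minimal acyc) => v; rewrite in_setD => /andP [vP v_inner] v_first.
have v_preds e : hd e = v -> tl e \in P.
  by move=> /v_first; rewrite in_setD tail_inner andbT negbK.
have [g' cod'] := coded_step cod vP v_inner v_preds.
by exists (v |: P), g'; rewrite cardsU1 vP card_P.
Qed.

Theorem network_code : exists2 g : E -> 'rV[F]_n, code_valid tl hd src g &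
  forall k, (target k <= \rank (\sum_(e | hd e == term k) <<g e>>)%MS)%N.
Proof.
have [P [g [card_P [P_inner _ P_valid P_rank]]]] := coded_card (leqnn _).
have P_all : P = inner by apply/eqP; rewrite eqEcard P_inner card_P leqnn.
exists g => [e | k]; first by apply: P_valid; rewrite P_all tail_inner.
apply: leq_trans (P_rank set0 k) _; rewrite cards0 addn0 mxrankS //.
apply/sumsmx_subP => u /andP [u_out reach_u].
have u_term : u = term k.
  move: u_out; rewrite P_all inE negb_forall => /existsP [k' /negPn /eqP u_k'].
  by rewrite u_k' in reach_u *; exact: esym (reach_sink (term_sink^~ k') reach_u).
rewrite /inflow u_term src_term adds0mx.
by apply: sumsmx_mono => e /andP [/andP [_ ->] _].
Qed.

End Construction.

Section TwoUnicast.
Variables (V E : finType) (tl hd : E -> V) (s1 s2 t1 t2 : V).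
Hypotheses (acyc : acyclic tl hd) (s1s2 : s1 != s2).
Hypotheses (s1t1 : s1 != t1) (s1t2 : s1 != t2) (s2t1 : s2 != t1) (s2t2 : s2 != t2).
Hypotheses (s1_in : forall e, hd e != s1) (s2_in : forall e, hd e != s2).
Hypotheses (t1_out : forall e, tl e != t1) (t2_out : forall e, tl e != t2).
Variables (R1 R2 : nat) (F : finFieldType).

Local Notation reach := (reach tl hd).
Local Notation mincut := (mincut tl hd).

Definition source (b : bool) := if b then s1 else s2.
Definition sink (b : bool) := if b then t1 else t2.
Definition rate (b : bool) := if b then R1 else R2.
Definition proj (b : bool) : 'M[F]_(R1 + R2) := if b then pid_mx R1 else copid_mx R1.

Definition src2 (u : V) : 'M[F]_(R1 + R2) :=
  if u == s1 then proj true else if u == s2 then proj false else 0.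

Lemma source_sink b b' : source b != sink b'.
Proof. by case: b; case: b'. Qed.

Lemma sources_pred2 b x :
  pred2 s1 s2 x -> pred1 (source b) x || pred1 (source (~~ b)) x.
Proof. by case: b => //=; rewrite orbC. Qed.

Lemma sink_out e b : tl e != sink b.
Proof. by case: b. Qed.

Lemma src2_source b : src2 (source b) = proj b.
Proof. by rewrite /src2; case: b => /=; rewrite ?eqxx // eq_sym (negbTE s1s2). Qed.

Lemma src2_sink b : src2 (sink b) = 0.
Proof.
rewrite /src2 eq_sym (negbTE (source_sink true b)).
by rewrite eq_sym (negbTE (source_sink false b)).
Qed.

Lemma proj_sum b : proj b + proj (~~ b) = 1%:M.
Proof. by rewrite /proj /copid_mx; case: b; rewrite /= ?subrK // addrC subrK. Qed.

Lemma rank_proj b : \rank (proj b) = rate b.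
Proof. by case: b; rewrite /= ?rank_pid_mx ?rank_copid_mx ?leq_addr ?addKn. Qed.

Lemma rate_sum b : (rate b + rate (~~ b) = R1 + R2)%N.
Proof. by case: b; rewrite //= addnC. Qed.

Lemma src2_proj b v : v != source b -> src2 v *m proj b = 0.
Proof.
rewrite /src2; case: b => /= /negbTE ->.
  by case: eqP; rewrite ?mul0mx ?mul_copid_mx_pid ?leq_addr.
by case: eqP; rewrite ?mul0mx ?mul_pid_mx_copid ?leq_addr.
Qed.

Lemma row_mx_proj (d1 : 'rV[F]_R1) (d2 : 'rV[F]_R2) b :
  row_mx d1 d2 *m proj b = if b then row_mx d1 0 else row_mx 0 d2.
Proof.
  have pid_E : row_mx d1 d2 *m (pid_mx R1 : 'M_(R1 + R2)) = row_mx d1 (0 : 'rV_R2).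
  by rewrite (@pid_mx_block F R2 R2 R1) mul_row_block !mulmx0 mulmx1 !addr0.
case: b => //=; rewrite /copid_mx mulmxBr mulmx1 pid_E opp_row_mx add_row_mx.
by rewrite subrr oppr0 addr0.
Qed.

Lemma proj_kill b (d1 : 'rV[F]_R1) (d2 : 'rV[F]_R2) :
  proj b *m (row_mx d1 d2)^T = 0 -> if b then d1 = 0 else d2 = 0.
Proof.
have tr_proj : (proj b)^T = proj b.
  by case: b; rewrite /= ?tr_pid_mx // /copid_mx linearB /= trmx1 tr_pid_mx.
move/(congr1 trmx); rewrite trmx_mul tr_proj trmxK trmx0 row_mx_proj.
by case: b {tr_proj} => /eqP; rewrite row_mx_eq0 => /andP [/eqP d1_0 /eqP d2_0].
Qed.

Section Code.
Variable g : E -> 'rV[F]_(R1 + R2).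
Hypothesis g_valid : code_valid tl hd src2 g.

(* Nothing enters a source, so it only emits rows of its own coordinates. *)
Lemma out_source b e : tl e = source b ->
  if b then rsubmx (g e) = 0 else lsubmx (g e) = 0.
Proof.
move=> tl_e; have := g_valid e; rewrite /node_space big_pred0 => [|e'].
  rewrite addsmx0 tl_e src2_source => /submxP [D ->].
  by rewrite -[D]hsubmxK row_mx_proj; case: b {tl_e} => /=; rewrite ?row_mxKr ?row_mxKl.
by apply/negbTE; rewrite tl_e; case: b {tl_e}.
Qed.

Definition coding_coefs (b : E -> E -> F) := forall e, tl e != s1 -> tl e != s2 ->
  g e = \sum_(e' | hd e' == tl e) b e' e *: g e'.

Lemma coding_coefs_exist : exists b, coding_coefs b.
Proof.
have /fin_all_exists [c c_ok] : forall e, exists c : E -> F,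
    tl e != s1 -> tl e != s2 -> g e = \sum_(e' | hd e' == tl e) c e' *: g e'.
  move=> e; have [/andP [ns1 ns2] | not_inner] := boolP ((tl e != s1) && (tl e != s2)).
    have := g_valid e; rewrite /node_space /src2 (negbTE ns1) (negbTE ns2) adds0mx.
    by case/sub_sum_rows => c c_e; exists c.
  by exists (fun=> 0) => ns1 ns2; rewrite ns1 ns2 in not_inner.
by exists (fun e' e => c e e').
Qed.

Variable b : E -> E -> F.
Hypothesis b_ok : coding_coefs b.

Lemma edge_symbol x1 x2 y :
  consistent tl hd s1 s2 (fun e => lsubmx (g e)) (fun e => rsubmx (g e)) b x1 x2 y ->
  forall e, y e = dot (g e) (row_mx x1 x2).
Proof.
move=> y_ok; elim/(acyclic_edge_ind acyc) => e IH.
have [y_s1 [y_s2 y_in]] := y_ok e.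
have [tl_s1 | ns1] := eqVneq (tl e) s1.
  by rewrite y_s1 // dot_split (out_source (b := true)) // dot0 addr0 dotE.
have [tl_s2 | ns2] := eqVneq (tl e) s2.
  by rewrite y_s2 // dot_split (out_source (b := false)) // dot0 add0r dotE.
rewrite y_in; [|exact/eqP|exact/eqP].
rewrite (b_ok ns1 ns2) /dot mulmx_suml summxE; apply: eq_bigr => e' /eqP hd_e'.
by rewrite -scalemxAl mxE IH.
Qed.

Lemma decode_difference t (Pw : 'M[F]_(R1 + R2)) x1 x1' x2 x2' y y' :
  consistent tl hd s1 s2 (fun e => lsubmx (g e)) (fun e => rsubmx (g e)) b x1 x2 y ->
  consistent tl hd s1 s2 (fun e => lsubmx (g e)) (fun e => rsubmx (g e)) b x1' x2' y' ->
  (forall e, hd e = t -> y e = y' e) ->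
  (Pw <= \sum_(e | hd e == t) <<g e>>)%MS ->
  Pw *m (row_mx (x1 - x1') (x2 - x2'))^T = 0.
Proof.
move=> y_ok y'_ok same /submx_trans Pw_sub; apply/eqP; rewrite -sub_kermx.
apply: Pw_sub; apply/sumsmx_subP => e /eqP hd_e; rewrite genmxE sub_kermx.
have := same e hd_e; rewrite (edge_symbol y_ok) (edge_symbol y'_ok) /dot => same_e.
rewrite -add_row_mx -opp_row_mx; apply/eqP/matrixP => i j.
by rewrite !ord1 linearB /= mulmxBr [LHS]mxE same_e !mxE subrr.
Qed.

End Code.

(* The rank that terminal sink b must receive: all of its own message plus
   as much interference as can cross a minimum cut from the other source. *)
Definition target b :=
  (rate b + minn (rate (~~ b)) (mincut (pred1 (source (~~ b))) (pred1 (sink b))))%N.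

Lemma initial_rank b (C : {set E}) :
  (rate b + mincut (pred1 (source (~~ b))) (pred1 (sink b))
     <= mincut (pred2 s1 s2) (pred1 (sink b)))%N ->
  (target b <= \rank (\sum_(u | reach C u (sink b)) src2 u)%MS + #|C|)%N.
Proof.
set sa := source b; set sb := source (~~ b); set t := sink b; move=> le_cut.
set X := (\sum_(u | reach C u t) src2 u)%MS.
have in_X s : reach C s t -> (src2 s <= X)%MS by move=> reach_s; exact: (sumsmx_sup s).
have cut_sep s : ~~ reach C s t -> separates tl hd (pred1 s) (pred1 t) C.
  by move=> no_path; apply/separatesP => x y /eqP -> /eqP ->.
have [Cb Cb_sep Cb_card] : exists2 C', separates tl hd (pred1 sb) (pred1 t) C' &
    #|C'| = mincut (pred1 sb) (pred1 t).
  by apply: mincut_ex => x y /eqP -> /eqP ->; exact: source_sink.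
have rank_a := rank_proj b; have rank_b := rank_proj (~~ b); have := rate_sum b.
rewrite /target -/sa -/sb -/t.
(* if both sources reach t, X is the whole space; if only sa does, C cuts
   sb from t; if only sb does, C with a minimum cut for sb cuts both sources;
   if neither does, C itself cuts both *)
have [ra | nra] := boolP (reach C sa t); have [rb | nrb] := boolP (reach C sb t).
- have : (1%:M <= X)%MS.
    by rewrite -(proj_sum b); apply: addmx_sub; rewrite -src2_source in_X.
  by move/mxrankS; rewrite mxrank1; lia.
- have := mxrankS (in_X _ ra); have := mincut_le (cut_sep _ nrb).
  by rewrite src2_source; lia.
- have := mxrankS (in_X _ rb); rewrite src2_source.
  have := mincut_le (separates_union (sources_pred2 b) (cut_sep _ nra) Cb_sep).
  by have [card_U _] := leq_card_setU C Cb; lia.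
have := mincut_le (separates_union (sources_pred2 b) (cut_sep _ nra) (cut_sep _ nrb)).
by rewrite setUid; lia.
Qed.

Lemma achievable_large_field : (#|{: {set E} * bool}| < #|F|)%N ->
  (mincut (pred1 s1) (pred1 t2) + mincut (pred1 s2) (pred1 t1)
     <= minn (mincut (pred2 s1 s2) (pred1 t1)) (mincut (pred2 s1 s2) (pred1 t2)))%N ->
  (R1 <= mincut (pred2 s1 s2) (pred1 t1) - mincut (pred1 s2) (pred1 t1))%N ->
  (R2 <= mincut (pred2 s1 s2) (pred1 t2) - mincut (pred1 s1) (pred1 t2))%N ->
  achievable tl hd s1 s2 t1 t2 R1 R2.
Proof.
move=> large_F cut_cond le_R1 le_R2.
(* the rate conditions leave room for the interference of the other source *)
have budget (R k K : nat) : (k <= K -> R <= K - k -> R + k <= K)%N by lia.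
have init C side :
    (target side <= \rank (\sum_(u | reach C u (sink side)) src2 u)%MS + #|C|)%N.
  apply: initial_rank; case: side; apply: budget => //.
    exact: leq_trans (leq_addl _ _) (leq_trans cut_cond (geq_minl _ _)).
  exact: leq_trans (leq_addr _ _) (leq_trans cut_cond (geq_minr _ _)).
have [g g_valid g_rank] := network_code acyc sink_out src2_sink large_F init.
have [b b_ok] := coding_coefs_exist g_valid.
exists F, (fun e => lsubmx (g e)), (fun e => rsubmx (g e)), b.
move=> x1 x1' x2 x2' y y' y_ok y'_ok.
have decode side : (forall e, hd e = sink side -> y e = y' e) ->
    proj side *m (row_mx (x1 - x1') (x2 - x2'))^T = 0.
  move=> same; apply: (decode_difference g_valid b_ok y_ok y'_ok same).
  have [C C_sep C_card] : exists2 C,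
      separates tl hd (pred1 (source (~~ side))) (pred1 (sink side)) C &
      #|C| = mincut (pred1 (source (~~ side))) (pred1 (sink side)).
    by apply: mincut_ex => x z /eqP -> /eqP ->; exact: source_sink.
  apply: (received_contains acyc g_valid (proj_sum side) (src2_proj (b := ~~ side)) C_sep).
  by rewrite !rank_proj C_card; exact: g_rank.
by split=> [/(decode true) | /(decode false)] /proj_kill /eqP; rewrite subr_eq0 => /eqP.
Qed.

End TwoUnicast.

Local Close Scope ring_scope.

Theorem theorem2 (V E : finType) (tl hd : E -> V) (s1 s2 t1 t2 : V)
  (Hacyc : acyclic tl hd)
  (Hs12 : s1 != s2) (Ht12 : t1 != t2)
  (Hst11 : s1 != t1) (Hst12 : s1 != t2) (Hst21 : s2 != t1) (Hst22 : s2 != t2)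
  (Hs1in : forall e, hd e != s1) (Hs2in : forall e, hd e != s2)
  (Ht1out : forall e, tl e != t1) (Ht2out : forall e, tl e != t2)
  (R1 R2 : nat) :
  let k1_2 := mincut tl hd (pred1 s1) (pred1 t2) in
  let k2_1 := mincut tl hd (pred1 s2) (pred1 t1) in
  let k12_1 := mincut tl hd (pred2 s1 s2) (pred1 t1) in
  let k12_2 := mincut tl hd (pred2 s1 s2) (pred1 t2) in
  k1_2 + k2_1 <= minn k12_1 k12_2 ->
  R1 <= k12_1 - k2_1 ->
  R2 <= k12_2 - k1_2 ->
  achievable tl hd s1 s2 t1 t2 R1 R2.
Proof.
have [p lt_p p_prime] := prime_above #|{: {set E} * bool}|.
apply: (@achievable_large_field V E tl hd s1 s2 t1 t2 Hacyc Hs12 Hst11 Hst12 Hst21 Hst22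
          Hs1in Hs2in Ht1out Ht2out R1 R2 ('F_p : finFieldType)).
by rewrite card_Fp.
Qed.
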